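(* Let $(X,\|\cdot\|)$ be a Banach space, $A,B\subset X$ nonempty, let $\phi:A\times\mathbb{R}^+\to\mathbb{R}^+$ have the positive property about $A$, and suppose $A$ is a uniformly convex set about $\phi$. Then the ordered pair $(A,B)$ has the $BUC$ property.
   Context: The metric is $\rho(x,y)=\|x-y\|$; $\mathrm{dist}(A,B)=\inf\{\|a-b\|:a\in A,b\in B\}$; $B(x_0,r)=\{x\in X:\|x-x_0\|<r\}$; $\mathbb{R}^+=(0,\infty)$. A function $\phi:A\times\mathbb{R}^+\to\mathbb{R}^+$ has the positive property about $A$ if for every bounded subset $A'\subset A$ and every $\varepsilon_0>0$ one has $\inf\{\phi(x,\varepsilon):x\in A',\ \varepsilon\ge\varepsilon_0\}>0$. The set $A$ is uniformly convex about $\phi$ if for every $\varepsilon>0$ and all $x,y\in A$ with $\|x-y\|\ge\varepsilon$ one has $\frac{x+y}{2}\in A$ and $B\left(\frac{x+y}{2},\phi\left(\frac{x+y}{2},\varepsilon\right)\right)\subset A$. The ordered pair $(A,B)$ has the bounded $UC$ property ($BUC$) if for all bounded sequences $\{x_n\},\{z_n\}\subset A$ and every sequence $\{y_n\}\subset B$ with $\lim_n\|x_n-y_n\|=\lim_n\|z_n-y_n\|=\mathrm{dist}(A,B)$ one has $\lim_n\|x_n-z_n\|=0$. *)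

From HB Require Import structures.
From mathcomp Require Import all_boot all_order all_algebra.
From mathcomp Require Import all_classical all_reals all_analysis.
Set Implicit Arguments. Unset Strict Implicit. Unset Printing Implicit Defensive.
Import Order.TTheory GRing.Theory Num.Theory.
Import numFieldNormedType.Exports.
Local Open Scope classical_set_scope.
Local Open Scope ring_scope.

Definition setdist (R : realType) (V : normedModType R) (A B : set V) : R :=
  inf [set `|a - b| | a in A & b in B].

Definition oball (R : realType) (V : normedModType R) (x0 : V) (r : R) : set V :=
  [set x | `|x - x0| < r].

(* phi : A x R^+ -> R^+, modelled as a function V -> R -> R taking positive
   values on A x (0,oo). *)
Definition phi_pos_valued (R : realType) (V : normedModType R) (A : set V)
  (phi : V -> R -> R) : Prop :=
  forall x eps, A x -> 0 < eps -> 0 < phi x eps.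

Definition bounded_set (R : realType) (V : normedModType R) (A' : set V) : Prop :=
  exists M : R, forall x, A' x -> `|x| <= M.

(* positive property about A.  Empty A' is excluded: in the paper inf of the
   empty set is +oo > 0, so that case holds vacuously; mathcomp's inf set0 = 0. *)
Definition positive_property (R : realType) (V : normedModType R) (A : set V)
  (phi : V -> R -> R) : Prop :=
  forall A' : set V, A' `<=` A -> A' !=set0 -> bounded_set A' ->
  forall eps0 : R, 0 < eps0 ->
    0 < inf [set phi x eps | x in A' & eps in [set e | eps0 <= e]].

Definition unif_convex_about (R : realType) (V : normedModType R) (A : set V)
  (phi : V -> R -> R) : Prop :=
  forall eps : R, 0 < eps -> forall x y, A x -> A y -> eps <= `|x - y| ->
    A (2%:R^-1 *: (x + y)) /\
    oball (2%:R^-1 *: (x + y)) (phi (2%:R^-1 *: (x + y)) eps) `<=` A.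

Definition bounded_seq (R : realType) (V : normedModType R) (u : nat -> V) : Prop :=
  exists M : R, forall n, `|u n| <= M.

Definition BUC (R : realType) (V : normedModType R) (A B : set V) : Prop :=
  forall (x z y : nat -> V),
    bounded_seq x -> bounded_seq z ->
    (forall n, A (x n)) -> (forall n, A (z n)) -> (forall n, B (y n)) ->
    (fun n => `|x n - y n|) @ \oo --> setdist A B ->
    (fun n => `|z n - y n|) @ \oo --> setdist A B ->
    (fun n => `|x n - z n|) @ \oo --> (0 : R).

(* If the midpoint m of two eps-separated points of A carries a ball of radius
   at least delta > 0 inside A, then moving m by delta towards y in B shows
   dist(A,B) <= |m - y| - delta, hence dist(A,B) + delta <= (|x - y| + |z - y|)/2.
   For bounded sequences the positive property gives one delta for all indices
   where |x_n - z_n| >= eps, and this contradicts |x_n - y_n|, |z_n - y_n| -> dist(A,B)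
   once dist(A,B) > 0; when dist(A,B) = 0 the triangle inequality suffices. *)
From Pilot Require Import Defs.
From HB Require Import structures.
From mathcomp Require Import all_boot all_order all_algebra.
From mathcomp Require Import all_classical all_reals all_analysis.
Set Implicit Arguments. Unset Strict Implicit. Unset Printing Implicit Defensive.
Import Order.TTheory GRing.Theory Num.Theory.
Import numFieldNormedType.Exports.
Local Open Scope classical_set_scope.
Local Open Scope ring_scope.

Lemma cvgr_lt_addr (R : realType) (u : nat -> R) (d e : R) :
  u @ \oo --> d -> 0 < e -> \forall t \near \oo, u t < d + e.
Proof.
move=> /cvgrPdist_lt u_d e0; apply: filterS (u_d e e0) => t.
by rewrite ltr_distl => /andP[+ _]; rewrite ltrBlDr.
Qed.

Section Midpoints.
Variables (R : realType) (V : normedModType R).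

Definition midpoint (x z : V) : V := 2^-1 *: (x + z).

Lemma midpoint_dist_le (x z y : V) :
  `|midpoint x z - y| <= (`|x - y| + `|z - y|) / 2.
Proof.
have -> : midpoint x z - y = 2^-1 *: ((x - y) + (z - y)).
  have half2 : (2^-1 + 2^-1 : R) = 1 by rewrite [RHS](splitr 1) mul1r.
  by rewrite /midpoint !scalerDr !scalerN addrACA -opprD -scalerDl half2 scale1r.
rewrite normrZ ger0_norm ?invr_ge0 ?ler0n // mulrC.
by rewrite ler_pM2r ?invr_gt0 ?ltr0n // ler_normD.
Qed.

Lemma bounded_set_midpoints (x z : nat -> V) (P : set nat) :
  bounded_seq x -> bounded_seq z -> Defs.bounded_set [set midpoint (x n) (z n) | n in P].
Proof.
move=> [Mx hMx] [Mz hMz]; exists (2^-1 * (Mx + Mz)) => _ [n _ <-].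
rewrite normrZ ger0_norm ?invr_ge0 ?ler0n //.
rewrite ler_wpM2l ?invr_ge0 ?ler0n //.
by apply: le_trans (ler_normD _ _) _; apply: lerD.
Qed.

End Midpoints.

Section SetDistance.
Variables (R : realType) (V : normedModType R) (A B : set V).

Lemma setdist_le (a b : V) : A a -> B b -> setdist A B <= `|a - b|.
Proof.
move=> Aa Bb; apply: ge_inf; last by exists a => //; exists b.
by exists 0 => _ [a' _ [b' _ <-]].
Qed.

(* The point m + r (y - m)/|y - m| lies in the ball and at distance |m - y| - r from y. *)
Lemma setdist_le_sub_ball (m y : V) (rho r : R) :
  B y -> oball m rho `<=` A -> 0 < r -> r < rho -> r <= `|m - y| ->
  setdist A B <= `|m - y| - r.
Proof.
move=> By ballA r0 r_rho r_my.
pose u := y - m; pose w := m + (r / `|u|) *: u.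
have nu : `|u| = `|m - y| by rewrite /u distrC.
have u0 : 0 < `|u| by rewrite nu; apply: lt_le_trans r_my.
have ru : r / `|u| * `|u| = r by rewrite divfK ?gt_eqF.
have Aw : A w.
  apply: ballA; rewrite /oball /= /w addrAC subrr add0r normrZ.
  by rewrite ger0_norm ?divr_ge0 ?ltW // ru.
have -> : `|m - y| - r = `|w - y|.
  have -> : w - y = (1 - r / `|u|) *: (- u).
    by rewrite scalerBl scale1r scalerN opprK /w /u opprB addrAC.
  rewrite normrZ normrN ger0_norm; last by rewrite subr_ge0 ler_pdivrMr // mul1r nu.
  by rewrite mulrBl mul1r ru nu.
exact: setdist_le.
Qed.

Lemma cvg_dist_sub0 (x z y : nat -> V) :
  setdist A B <= 0 ->
  (fun n => `|x n - y n|) @ \oo --> setdist A B ->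
  (fun n => `|z n - y n|) @ \oo --> setdist A B ->
  (fun n => `|x n - z n|) @ \oo --> (0 : R).
Proof.
move=> d_le0 x_y z_y; apply/cvgrPdist_lt => eps eps0.
have e2 : 0 < eps / 2 by rewrite divr_gt0.
near=> t; rewrite sub0r normrN normr_id.
have x_close : `|x t - y t| < setdist A B + eps / 2 by near: t; exact: cvgr_lt_addr.
have z_close : `|z t - y t| < setdist A B + eps / 2 by near: t; exact: cvgr_lt_addr.
have -> : x t - z t = (x t - y t) - (z t - y t) by rewrite opprB addrA subrK.
apply: le_lt_trans (ler_normB _ _) (lt_le_trans (ltrD x_close z_close) _).
by rewrite [leRHS]splitr lerD // gerDr.
Unshelve. all: end_near.
Qed.

End SetDistance.

Section UniformConvexity.
Variables (R : realType) (V : normedModType R) (A B : set V) (phi : V -> R -> R).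
Hypotheses (phi_pos : phi_pos_valued A phi) (phi_pp : positive_property A phi)
  (A_uc : unif_convex_about A phi).

Lemma positive_property_lbound (A' : set V) (eps : R) :
  A' `<=` A -> Defs.bounded_set A' -> 0 < eps ->
  exists2 delta : R, 0 < delta & forall a, A' a -> delta <= phi a eps.
Proof.
move=> A'A bA' eps0; have [-> | /set0P A'_ne] := eqVneq A' set0; first by exists 1.
exists (inf [set phi a e | a in A' & e in [set e | eps <= e]]).
  exact: phi_pp.
move=> a A'a; apply: ge_inf; last by exists a => //; exists eps => /=.
exists 0 => _ [b A'b [e /= eps_e <-]]; apply/ltW/phi_pos; first exact: A'A.
exact: lt_le_trans eps_e.
Qed.

Lemma uc_setdist_gap (x z y : V) (eps r : R) :
  A x -> A z -> B y -> 0 < eps -> eps <= `|x - z| ->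
  0 < r -> r < phi (midpoint x z) eps -> r <= setdist A B ->
  setdist A B + r <= (`|x - y| + `|z - y|) / 2.
Proof.
move=> Ax Az By eps0 far r0 r_phi r_d.
have [Am ballA] := A_uc eps0 Ax Az far.
have d_my := setdist_le Am By.
rewrite -lerBrDr; apply: le_trans (lerB (midpoint_dist_le x z y) (lexx r)).
exact: setdist_le_sub_ball ballA r0 r_phi (le_trans r_d d_my).
Qed.

Lemma uc_cvg_dist_sub0 (x z y : nat -> V) :
  0 < setdist A B -> bounded_seq x -> bounded_seq z ->
  (forall n, A (x n)) -> (forall n, A (z n)) -> (forall n, B (y n)) ->
  (fun n => `|x n - y n|) @ \oo --> setdist A B ->
  (fun n => `|z n - y n|) @ \oo --> setdist A B ->
  (fun n => `|x n - z n|) @ \oo --> (0 : R).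
Proof.
move=> d0 xb zb Ax Az By x_y z_y; apply/cvgrPdist_lt => eps eps0.
pose far := [set n | eps <= `|x n - z n|].
have midA : [set midpoint (x n) (z n) | n in far] `<=` A.
  by move=> _ [n far_n <-]; case: (A_uc eps0 (Ax n) (Az n) far_n).
have [delta delta0 delta_le] :=
  positive_property_lbound midA (bounded_set_midpoints far xb zb) eps0.
pose r := Num.min delta (setdist A B) / 2.
have min0 : 0 < Num.min delta (setdist A B) by rewrite lt_min delta0.
have r0 : 0 < r by rewrite divr_gt0.
have [r_delta r_d] : r < delta /\ r < setdist A B.
  by apply/andP; rewrite -lt_min ltr_pdivrMr // ltr_pMr ?ltr1n.
near=> t; rewrite sub0r normrN normr_id ltNge; apply/negP => far_t.
have x_close : `|x t - y t| < setdist A B + r by near: t; exact: cvgr_lt_addr.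
have z_close : `|z t - y t| < setdist A B + r by near: t; exact: cvgr_lt_addr.
have r_phi : r < phi (midpoint (x t) (z t)) eps.
  by apply: lt_le_trans r_delta (delta_le _ _); exists t.
have := uc_setdist_gap (Ax t) (Az t) (By t) eps0 far_t r0 r_phi (ltW r_d).
by rewrite leNgt ltr_pdivrMr // mulrDr mulr1 ltrD.
Unshelve. all: end_near.
Qed.

End UniformConvexity.

Theorem theorem42 (R : realType) (V : completeNormedModType R)
  (A B : set V) (phi : V -> R -> R) :
  A !=set0 -> B !=set0 ->
  phi_pos_valued A phi ->
  positive_property A phi ->
  unif_convex_about A phi ->
  BUC A B.
Proof.
move=> _ _ phi_pos phi_pp A_uc x z y xb zb Ax Az By x_y z_y.
have [d0 | d_le0] := ltP 0 (setdist A B).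
- exact: (uc_cvg_dist_sub0 phi_pos phi_pp A_uc d0 xb zb Ax Az By x_y z_y).
- exact: cvg_dist_sub0 d_le0 x_y z_y.
Qed.
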